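(* Let $\ell\ge1$ and $V=\prod_{j=\ell,\dots,2,1}(c_1x^jy^jc_2)^2$. If $C$ is an accepting computation of $V$, then $C$ never matches a symbol $x$ with another symbol from the same $x$-block, and never matches a symbol $y$ with another symbol from the same $y$-block.
   Context: Queue automaton: a configuration is written $Q\,\|\,x$ ($Q$ = queue contents, $x$ = remaining input); a step from $Q\,\|\,\sigma x$ ($\sigma$ a symbol) goes either to $Q\sigma\,\|\,x$ (push the input symbol) or, if $Q=\sigma Q'$, to $Q'\,\|\,x$ (the input symbol is matched against the leftmost queue symbol, which is popped; that queue symbol was pushed from an earlier input position and the two occurrences are said to be matched). An accepting computation of $w$ is a computation $\varepsilon\,\|\,w\vdash^*\varepsilon\,\|\,\varepsilon$ ($\varepsilon$ the empty string). Here $c_1,c_2,x,y$ are four distinct symbols. In $V=(c_1x^\ell y^\ell c_2)(c_1x^\ell y^\ell c_2)\cdots(c_1x^1y^1c_2)(c_1x^1y^1c_2)$, each displayed maximal subword $x^j$ is called an $x$-block and each displayed subword $y^j$ a $y$-block. *)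

From mathcomp Require Import all_boot.
Set Implicit Arguments. Unset Strict Implicit. Unset Printing Implicit Defensive.

Inductive sym := c1 | c2 | sx | sy.

(* A configuration Q || x of the queue automaton on input w.
   The queue Q is a list of symbols, each tagged with the input position
   (0-based) it was pushed from; the remaining input x is  drop i w,
   where i is the number of input symbols already read. *)
Definition config := (seq (nat * sym) * nat)%type.

(* One step of a computation on w.  The label is [Some (j, i)] when the
   input symbol at position i is matched against the queue symbol pushed
   from position j, and [None] for a push. *)
Inductive step (w : seq sym) : config -> config -> option (nat * nat) -> Prop :=
| step_push (Q : seq (nat * sym)) (i : nat) (s : sym) :
    onth w i = Some s -> step w (Q, i) (rcons Q (i, s), i.+1) None
| step_pop (Q : seq (nat * sym)) (j i : nat) (s : sym) :
    onth w i = Some s -> step w ((j, s) :: Q, i) (Q, i.+1) (Some (j, i)).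

Inductive comp (w : seq sym) : config -> seq (nat * nat) -> Prop :=
| comp_end : comp w ([::], size w) [::]
| comp_push c c' M : step w c c' None -> comp w c' M -> comp w c M
| comp_pop c c' j i M : step w c c' (Some (j, i)) -> comp w c' M ->
    comp w c ((j, i) :: M).

Definition accepting (w : seq sym) (M : seq (nat * nat)) : Prop :=
  comp w ([::], 0) M.

Definition factor (j : nat) : seq sym := c1 :: nseq j sx ++ nseq j sy ++ [:: c2].
Definition V (l : nat) : seq sym :=
  flatten [seq factor j ++ factor j | j <- rev (iota 1 l)].

Definition same_block (w : seq sym) (a : sym) (p q : nat) : Prop :=
  forall k, minn p q <= k <= maxn p q -> onth w k = Some a.

From Pilot Require Import Defs.
From mathcomp Require Import all_boot zify.

(* Call c1 and c2 separators.  In V every x and y is preceded by an odd number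
   of separators.  Pushing and popping change the separators in the queue and
   the separators read by the same amount modulo 2, so when a letter is pushed
   the queue has odd parity and thus already holds a separator.  Hence every
   queue entry ahead of the first queued separator has seen a separator read
   since it was pushed, and whatever pops it matches it across a separator, so
   never inside a block. *)

Lemma take_succ_onth {T : Type} {w : seq T} {t : nat} {s : T} :
  onth w t = Some s -> take t.+1 w = rcons (take t w) s.
Proof.
move=> wt; have lt_t : t < size w by rewrite -onthTE wt.
by rewrite (take_nth s lt_t) -odflt_onth wt.
Qed.

Section SeparatedMatches.

Variable sep : pred sym.

Definition enclosed (w : seq sym) : Prop :=
  forall t s, onth w t = Some s -> ~~ sep s -> odd (count sep (take t w)).

Definition sep_at (w : seq sym) (k : nat) : bool := oapp sep false (onth w k).

Definition sep_between (w : seq sym) (j t : nat) : bool :=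
  has (sep_at w) (iota j (t - j)).

Definition sep_free_prefix (Q : seq (nat * sym)) : seq (nat * sym) :=
  take (find (sep \o snd) Q) Q.

Definition queue_inv (w : seq sym) (c : config) : Prop :=
  let: (Q, t) := c in
  [/\ all (fun e => e.1 < t) Q,
      odd (count (sep \o snd) Q) = odd (count sep (take t w)) &
      all (fun e => sep_between w e.1 t) (sep_free_prefix Q)].

Lemma enclosed_nil : enclosed [::].
Proof. by move=> t s; rewrite onth0n. Qed.

Lemma enclosed_cat (w1 w2 : seq sym) :
  enclosed w1 -> enclosed w2 -> ~~ odd (count sep w1) -> enclosed (w1 ++ w2).
Proof.
move=> enc1 enc2 even1 t s; rewrite onth_cat take_cat.
case: ifP => _ wt nsep; first exact: enc1 wt nsep.
by rewrite count_cat oddD (negbTE even1) (enc2 _ _ wt nsep).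
Qed.

Lemma enclosed_flatten_map {I : Type} (f : I -> seq sym) (js : seq I) :
  (forall j, enclosed (f j) /\ ~~ odd (count sep (f j))) ->
  enclosed (flatten (map f js)).
Proof.
move=> f_ok; elim: js => [|j js IH] /=; first exact: enclosed_nil.
by have [enc_j even_j] := f_ok j; apply: enclosed_cat.
Qed.

Lemma enclosed_bracket (a b : sym) (u : seq sym) :
  sep a -> sep b -> ~~ has sep u -> enclosed (a :: u ++ [:: b]).
Proof.
move=> sep_a sep_b u_free [|t] s /=; first by case=> <-; rewrite sep_a.
rewrite onth_cat; case: ifP => [lt_t _ _ | _ /onth1P[_ <-]]; last by rewrite sep_b.
rewrite sep_a take_cat lt_t /=.
suff -> : count sep (take t u) = 0 by [].
apply/eqP; rewrite -leqn0 leqNgt -has_count; apply: contra u_free.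
by rewrite -{2}(cat_take_drop t u) has_cat => ->.
Qed.

Lemma sep_betweenP (w : seq sym) (j t : nat) :
  reflect (exists2 k, j <= k < t & sep_at w k) (sep_between w j t).
Proof.
apply: (iffP hasP) => -[k k_jt sep_k]; exists k => //;
  by move: k_jt; rewrite mem_iota; lia.
Qed.

Lemma sep_between_succ (w : seq sym) (j t : nat) :
  sep_between w j t -> sep_between w j t.+1.
Proof. by case/sep_betweenP=> k k_jt sep_k; apply/sep_betweenP; exists k => //; lia. Qed.

Lemma sep_free_prefix_rcons (Q : seq (nat * sym)) (e : nat * sym) :
  has (sep \o snd) (rcons Q e) -> sep_free_prefix (rcons Q e) = sep_free_prefix Q.
Proof.
rewrite /sep_free_prefix -cats1 has_cat find_cat.
case: ifP => [hasQ _ | /negbT noQ /= sep_e].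
  by rewrite take_cat -has_find hasQ.
rewrite orbF in sep_e; rewrite /= sep_e addn0 take_cat ltnn subnn take0 cats0.
by rewrite (hasNfind noQ) take_size.
Qed.

Lemma queue_inv_nil (w : seq sym) : queue_inv w ([::], 0).
Proof. by split; rewrite ?take0. Qed.

Lemma queue_inv_push (w : seq sym) (Q : seq (nat * sym)) (t : nat) (s : sym) :
  enclosed w -> onth w t = Some s ->
  queue_inv w (Q, t) -> queue_inv w (rcons Q (t, s), t.+1).
Proof.
move=> enc_w wt [ltQ par front].
have has_sep : has (sep \o snd) (rcons Q (t, s)).
  rewrite -cats1 has_cat /= orbF; apply/orP.
  case: (boolP (sep s)) => [sep_s | nsep]; [by right | left].
  by rewrite has_count odd_gt0 // par (enc_w _ _ wt nsep).
split.
- by rewrite all_rcons /= ltnSn; apply: sub_all ltQ => e /leqW.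
- by rewrite (take_succ_onth wt) -!cats1 !count_cat /= !oddD par.
- by rewrite sep_free_prefix_rcons //; apply: sub_all front => e /sep_between_succ.
Qed.

Lemma queue_inv_pop {w : seq sym} {Q : seq (nat * sym)} {j t : nat} {s : sym} :
  onth w t = Some s -> queue_inv w ((j, s) :: Q, t) ->
  sep_between w j t.+1 /\ queue_inv w (Q, t.+1).
Proof.
move=> wt [/= /andP[lt_jt ltQ] par front].
have ltQ' : all (fun e => e.1 < t.+1) Q by apply: sub_all ltQ => e /leqW.
have par' : odd (count (sep \o snd) Q) = odd (count sep (take t.+1 w)).
  move: par; rewrite /= (take_succ_onth wt) -cats1 count_cat /= addn0 !oddD => <-.
  by case: (sep s); case: (odd _).
case: (boolP (sep s)) => [sep_s | nsep].
- have sep_t i : i < t -> sep_between w i t.+1.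
    by move=> lt_it; apply/sep_betweenP; exists t; rewrite /sep_at ?wt //; lia.
  split; [exact: sep_t | split => //].
  have : all (fun e => e.1 < t) (sep_free_prefix Q ++ drop (find (sep \o snd) Q) Q).
    by rewrite cat_take_drop.
  by rewrite all_cat => /andP[+ _]; apply: sub_all => e /sep_t.
- move: front; rewrite /sep_free_prefix /= (negbTE nsep) /= => /andP[sep_j front].
  split; [exact: sep_between_succ | split => //].
  by apply: sub_all front => e /sep_between_succ.
Qed.

(* Unqualified [comp] would be ssrfun's function composition. *)
Lemma comp_matches_sep_between (w : seq sym) (c : config) (M : seq (nat * nat)) :
  enclosed w -> Defs.comp w c M -> queue_inv w c ->
  forall j i, (j, i) \in M -> sep_between w j i.+1.
Proof.
move=> enc_w; elim=> [|c' c'' M' st _ IH|c' c'' j' i' M' st _ IH] // inv.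
- by inversion st; subst; apply/IH/queue_inv_push.
- inversion st as [|Q j'' t s wt]; subst; have [sep_ji inv'] := queue_inv_pop wt inv.
  by move=> j i; rewrite in_cons => /orP[/eqP[-> ->] // | /IH]; apply.
Qed.

End SeparatedMatches.

Definition is_c (s : sym) : bool := if s is (c1 | c2) then true else false.

Lemma enclosed_factor (j : nat) : enclosed is_c (factor j).
Proof. by rewrite /factor catA; apply: enclosed_bracket; rewrite // has_cat !has_nseq !andbF. Qed.

Lemma count_factor (j : nat) : count is_c (factor j) = 2.
Proof. by rewrite /factor /= !count_cat !count_nseq. Qed.

Lemma enclosed_V (l : nat) : enclosed is_c (V l).
Proof.
apply: enclosed_flatten_map => j; rewrite count_cat count_factor; split => //.
by apply: enclosed_cat; rewrite ?count_factor //; apply: enclosed_factor.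
Qed.

Theorem lemma10 (l : nat) (M : seq (nat * nat)) :
  1 <= l -> accepting (V l) M ->
  forall j i, (j, i) \in M ->
    ~ same_block (V l) sx j i /\ ~ same_block (V l) sy j i.
Proof.
move=> _ acc j i ji.
have /sep_betweenP[k k_ji sep_k] :=
  comp_matches_sep_between _ _ _ _ (enclosed_V l) acc (queue_inv_nil _ _) _ _ ji.
have k_block : minn j i <= k <= maxn j i by lia.
by split=> block; move: sep_k; rewrite /sep_at (block k k_block).
Qed.
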